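(* Let $(Y,\|\cdot\|)$ be a normed space and $X$ its topological dual. Let $(g_n)$ be functions on $Y$ with: (a) each $g_n$ real-valued and convex; (b) $g_n\to g$ pointwise; (d'') there is $c>0$ with $|g_n(y)|\le c(1+\|y\|)$ for all $y\in Y$, $n\ge1$. Then $(g_n^* )$ $\Gamma$-converges to $g^*$ with respect to $\sigma(X,Y)$.
   Context: Convex conjugate: $g^*(x)=\sup_{y\in Y}\{\langle x,y\rangle-g(y)\}$, $x\in X$. $\Gamma$-limit: $\Gamma\text{-}\lim f_n(x)=\sup_{V\in\mathcal{N}(x)}\lim_n\inf_{y\in V}f_n(y)$. *)

From Stdlib Require Import Reals Lra List ClassicalEpsilon.
Open Scope R_scope.

Record NormedSpace := {
  ns_car :> Type;
  ns_zero : ns_car;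
  ns_add : ns_car -> ns_car -> ns_car;
  ns_opp : ns_car -> ns_car;
  ns_scal : R -> ns_car -> ns_car;
  ns_norm : ns_car -> R;
  ns_add_assoc : forall u v w, ns_add u (ns_add v w) = ns_add (ns_add u v) w;
  ns_add_comm : forall u v, ns_add u v = ns_add v u;
  ns_add_zero : forall u, ns_add u ns_zero = u;
  ns_add_opp : forall u, ns_add u (ns_opp u) = ns_zero;
  ns_scal_assoc : forall a b u, ns_scal a (ns_scal b u) = ns_scal (a * b) u;
  ns_scal_one : forall u, ns_scal 1 u = u;
  ns_scal_distr_l : forall a u v, ns_scal a (ns_add u v) = ns_add (ns_scal a u) (ns_scal a v);
  ns_scal_distr_r : forall a b u, ns_scal (a + b) u = ns_add (ns_scal a u) (ns_scal b u);
  ns_norm_nonneg : forall u, 0 <= ns_norm u;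
  ns_norm_eq0 : forall u, ns_norm u = 0 -> u = ns_zero;
  ns_norm_scal : forall a u, ns_norm (ns_scal a u) = Rabs a * ns_norm u;
  ns_norm_triangle : forall u v, ns_norm (ns_add u v) <= ns_norm u + ns_norm v
}.

Arguments ns_zero {_}.
Arguments ns_add {_}.
Arguments ns_opp {_}.
Arguments ns_scal {_}.
Arguments ns_norm {_}.

Definition is_linear_functional {Y : NormedSpace} (f : Y -> R) : Prop :=
  (forall u v, f (ns_add u v) = f u + f v) /\
  (forall a u, f (ns_scal a u) = a * f u).

Definition is_bounded_functional {Y : NormedSpace} (f : Y -> R) : Prop :=
  exists M : R, forall u, Rabs (f u) <= M * ns_norm u.

(* X = Y^* : continuous (= bounded) linear functionals on Y *)
Definition dual (Y : NormedSpace) : Type :=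
  { f : Y -> R | is_linear_functional f /\ is_bounded_functional f }.

Definition pair {Y : NormedSpace} (x : dual Y) (y : Y) : R := proj1_sig x y.

Inductive Rbar : Type :=
| Finite : R -> Rbar
| p_infty : Rbar
| m_infty : Rbar.

Definition Rbar_le (a b : Rbar) : Prop :=
  match a, b with
  | m_infty, _ => True
  | _, p_infty => True
  | Finite x, Finite y => x <= y
  | _, _ => False
  end.

Definition is_sup (S : Rbar -> Prop) (s : Rbar) : Prop :=
  (forall a, S a -> Rbar_le a s) /\
  (forall b, (forall a, S a -> Rbar_le a b) -> Rbar_le s b).

Definition is_inf (S : Rbar -> Prop) (s : Rbar) : Prop :=
  (forall a, S a -> Rbar_le s a) /\
  (forall b, (forall a, S a -> Rbar_le b a) -> Rbar_le b s).

(* supremum / infimum in [-oo, +oo] (they always exist) *)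
Definition Rbar_sup (S : Rbar -> Prop) : Rbar :=
  epsilon (inhabits m_infty) (is_sup S).
Definition Rbar_inf (S : Rbar -> Prop) : Rbar :=
  epsilon (inhabits p_infty) (is_inf S).

Definition Rbar_liminf (u : nat -> Rbar) : Rbar :=
  Rbar_sup (fun a => exists n, a = Rbar_inf (fun b => exists k, (n <= k)%nat /\ b = u k)).
Definition Rbar_limsup (u : nat -> Rbar) : Rbar :=
  Rbar_inf (fun a => exists n, a = Rbar_sup (fun b => exists k, (n <= k)%nat /\ b = u k)).

Definition convex_fun {Y : NormedSpace} (g : Y -> R) : Prop :=
  forall (u v : Y) (t : R), 0 <= t <= 1 ->
    g (ns_add (ns_scal t u) (ns_scal (1 - t) v)) <= t * g u + (1 - t) * g v.

Definition conjugate {Y : NormedSpace} (g : Y -> R) (x : dual Y) : Rbar :=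
  Rbar_sup (fun a => exists y : Y, a = Finite (pair x y - g y)).

Definition weakstar_nbhd {Y : NormedSpace} (x : dual Y) (V : dual Y -> Prop) : Prop :=
  exists (ys : list Y) (eps : R), 0 < eps /\
    forall x' : dual Y,
      (forall y, In y ys -> Rabs (pair x' y - pair x y) < eps) -> V x'.

Definition inf_on {Y : NormedSpace} (V : dual Y -> Prop) (f : dual Y -> Rbar) : Rbar :=
  Rbar_inf (fun a => exists x', V x' /\ a = f x').

Definition gamma_liminf {Y : NormedSpace} (f : nat -> dual Y -> Rbar) (x : dual Y) : Rbar :=
  Rbar_sup (fun a => exists V, weakstar_nbhd x V /\
                               a = Rbar_liminf (fun n => inf_on V (f n))).

Definition gamma_limsup {Y : NormedSpace} (f : nat -> dual Y -> Rbar) (x : dual Y) : Rbar :=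
  Rbar_sup (fun a => exists V, weakstar_nbhd x V /\
                               a = Rbar_limsup (fun n => inf_on V (f n))).

Definition gamma_converges {Y : NormedSpace} (f : nat -> dual Y -> Rbar) (F : dual Y -> Rbar) : Prop :=
  forall x, gamma_liminf f x = F x /\ gamma_limsup f x = F x.

(* The proof compares both Gamma-limits of [g_n^*] with [g^*] at a dual point x.
   - Lower bound: for fixed [y], [g_n^*(x') >= <x',y> - g_n y] is close to
     [<x,y> - g y] for [x'] weak-star close to [x] and [n] large.
   - Upper bound: given a basic neighbourhood of [x] (a finite family [ys] and a
     margin) and [dl > 0], we find for large [k] a point [x' = x + m] in it with
     [x' - g_k <= g^*(x) + dl].  The linear map [m] is a Hahn-Banach minorant of
     the inf-convolution of [g_k - x + g^*(x) + dl] with a multiple of the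
     l1-norm of coefficients on [ys], which keeps [m] small on [ys].  That this
     inf-convolution is nonnegative at the origin follows because the [g_k] are
     equi-Lipschitz (convexity plus linear growth), hence converge uniformly on
     compact balls of [span ys], and by convexity outside these balls. *)
From Stdlib Require Import Reals Lra Lia List Classical ClassicalEpsilon.
From mathcomp Require classical_sets.
Open Scope R_scope.

Arguments ns_add_assoc {_}. Arguments ns_add_comm {_}. Arguments ns_add_zero {_}.
Arguments ns_add_opp {_}. Arguments ns_scal_assoc {_}. Arguments ns_scal_one {_}.
Arguments ns_scal_distr_l {_}. Arguments ns_scal_distr_r {_}. Arguments ns_norm_nonneg {_}.
Arguments ns_norm_scal {_}. Arguments ns_norm_triangle {_}.

Section VectorAlgebra.
Context {Y : NormedSpace}.
Implicit Types (u v w : Y) (a b : R).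

Definition ns_sub u v : Y := ns_add u (ns_opp v).

Lemma add_0l u : ns_add ns_zero u = u.
Proof. rewrite ns_add_comm; apply ns_add_zero. Qed.

Lemma add_cancel_r u v w : ns_add u w = ns_add v w -> u = v.
Proof.
  intro H. rewrite <- (ns_add_zero u), <- (ns_add_zero v), <- (ns_add_opp w).
  rewrite !ns_add_assoc, H. reflexivity.
Qed.

Lemma scal_0 u : ns_scal 0 u = ns_zero.
Proof.
  apply (add_cancel_r _ _ (ns_scal 0 u)). rewrite add_0l, <- ns_scal_distr_r.
  f_equal; ring.
Qed.

Lemma scal_zero a : ns_scal a (@ns_zero Y) = ns_zero.
Proof. rewrite <- (scal_0 ns_zero), ns_scal_assoc, Rmult_0_r. reflexivity. Qed.

Lemma opp_scal u : ns_opp u = ns_scal (-1) u.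
Proof.
  apply (add_cancel_r _ _ u). rewrite ns_add_comm, ns_add_opp.
  rewrite <- (ns_scal_one u) at 2. rewrite <- ns_scal_distr_r.
  replace (-1 + 1) with 0 by ring. symmetry; apply scal_0.
Qed.

Lemma norm_zero : ns_norm (@ns_zero Y) = 0.
Proof. rewrite <- (scal_0 ns_zero), ns_norm_scal, Rabs_R0; ring. Qed.

Lemma add_add4 u v w (z : Y) :
  ns_add (ns_add u v) (ns_add w z) = ns_add (ns_add u w) (ns_add v z).
Proof.
  rewrite <- !ns_add_assoc. f_equal. rewrite !ns_add_assoc. f_equal. apply ns_add_comm.
Qed.

Lemma scal_add_same a b u : ns_add (ns_scal a u) (ns_scal b u) = ns_scal (a + b) u.
Proof. symmetry; apply ns_scal_distr_r. Qed.

Lemma scal_add4 a b u v w (z : Y) :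
  ns_add (ns_scal a (ns_add u w)) (ns_scal b (ns_add v z)) =
  ns_add (ns_add (ns_scal a u) (ns_scal b v)) (ns_add (ns_scal a w) (ns_scal b z)).
Proof. rewrite !ns_scal_distr_l. apply add_add4. Qed.

Lemma sub_self u : ns_sub u u = ns_zero.
Proof. apply ns_add_opp. Qed.

Lemma add_sub u v : ns_add u (ns_sub v u) = v.
Proof.
  unfold ns_sub. rewrite (ns_add_comm v), ns_add_assoc, ns_add_opp. apply add_0l.
Qed.

Lemma norm_sub_sym u v : ns_norm (ns_sub u v) = ns_norm (ns_sub v u).
Proof.
  assert (E : ns_sub u v = ns_scal (-1) (ns_sub v u)).
  { unfold ns_sub. rewrite ns_scal_distr_l, <- !opp_scal, ns_add_comm. f_equal.
    rewrite opp_scal, opp_scal, ns_scal_assoc. replace (-1 * -1) with 1 by ring.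
    symmetry; apply ns_scal_one. }
  rewrite E, ns_norm_scal.
  replace (Rabs (-1)) with 1 by (unfold Rabs; destruct Rcase_abs; lra). ring.
Qed.

Lemma sub_lin a b u v w :
  ns_sub (ns_add (ns_scal a u) v) (ns_add (ns_scal b u) w) =
  ns_add (ns_scal (a - b) u) (ns_sub v w).
Proof.
  unfold ns_sub. rewrite (opp_scal (ns_add _ _)), ns_scal_distr_l, ns_scal_assoc,
    <- (opp_scal w), add_add4, scal_add_same.
  do 2 f_equal. ring.
Qed.

End VectorAlgebra.

Lemma Rbar_le_trans a b c : Rbar_le a b -> Rbar_le b c -> Rbar_le a c.
Proof. destruct a, b, c; simpl; intros; auto; try lra; contradiction. Qed.

Lemma Rbar_le_antisym a b : Rbar_le a b -> Rbar_le b a -> a = b.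
Proof. destruct a, b; simpl; intros; auto; try contradiction. f_equal; lra. Qed.

Lemma sup_exists (S : Rbar -> Prop) : exists s, is_sup S s.
Proof.
  destruct (classic (S p_infty)) as [Hp|Hp].
  { exists p_infty; split; [intros [] _; simpl; auto|]. intros b Hb. apply Hb; auto. }
  destruct (classic (exists r, S (Finite r))) as [[r0 Hr0]|Hn].
  - destruct (classic (bound (fun r => S (Finite r)))) as [Hb|Hb].
    + destruct (completeness _ Hb (ex_intro _ r0 Hr0)) as [l [Hl1 Hl2]].
      exists (Finite l); split.
      * intros [r| |] Ha; simpl; auto; contradiction.
      * intros [] Hbb; simpl; auto.
        -- apply Hl2; intros x Hx. apply (Hbb (Finite x) Hx).
        -- apply (Hbb (Finite r0) Hr0).
    + exists p_infty; split; [intros [] _; simpl; auto|].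
      intros [] Hbb; simpl; auto.
      * apply Hb. exists r. intros x Hx. apply (Hbb (Finite x) Hx).
      * apply (Hbb (Finite r0) Hr0).
  - exists m_infty; split.
    + intros [] Ha; simpl; auto; try contradiction. apply Hn; eauto.
    + intros [] _; simpl; auto.
Qed.

(* Infima exist too: the infimum is the supremum of the lower bounds. *)
Lemma inf_exists (S : Rbar -> Prop) : exists s, is_inf S s.
Proof.
  destruct (sup_exists (fun b => forall a, S a -> Rbar_le b a)) as [l [H1 H2]].
  exists l; split.
  - intros a Ha. apply H2. intros b Hb. apply Hb; auto.
  - intros b Hb. apply H1; auto.
Qed.

Lemma le_sup (S : Rbar -> Prop) a : S a -> Rbar_le a (Rbar_sup S).
Proof. apply (epsilon_spec _ _ (sup_exists S)). Qed.

Lemma sup_le (S : Rbar -> Prop) b :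
  (forall a, S a -> Rbar_le a b) -> Rbar_le (Rbar_sup S) b.
Proof. apply (epsilon_spec _ _ (sup_exists S)). Qed.

Lemma inf_le (S : Rbar -> Prop) a : S a -> Rbar_le (Rbar_inf S) a.
Proof. apply (epsilon_spec _ _ (inf_exists S)). Qed.

Lemma le_inf (S : Rbar -> Prop) b :
  (forall a, S a -> Rbar_le b a) -> Rbar_le b (Rbar_inf S).
Proof. apply (epsilon_spec _ _ (inf_exists S)). Qed.

Lemma liminf_le_limsup (u : nat -> Rbar) : Rbar_le (Rbar_liminf u) (Rbar_limsup u).
Proof.
  apply sup_le. intros a [n ->]. apply le_inf. intros b [m ->].
  apply Rbar_le_trans with (u (Nat.max n m)).
  - apply inf_le. exists (Nat.max n m); split; auto; lia.
  - apply le_sup. exists (Nat.max n m); split; auto; lia.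
Qed.

Lemma liminf_ge (u : nat -> Rbar) (a : Rbar) (N : nat) :
  (forall k, (N <= k)%nat -> Rbar_le a (u k)) -> Rbar_le a (Rbar_liminf u).
Proof.
  intro H. apply Rbar_le_trans with (Rbar_inf (fun b => exists k, (N <= k)%nat /\ b = u k)).
  - apply le_inf. intros b [k [Hk ->]]. auto.
  - apply le_sup. eauto.
Qed.

Lemma limsup_le (u : nat -> Rbar) (a : Rbar) (N : nat) :
  (forall k, (N <= k)%nat -> Rbar_le (u k) a) -> Rbar_le (Rbar_limsup u) a.
Proof.
  intro H. apply Rbar_le_trans with (Rbar_sup (fun b => exists k, (N <= k)%nat /\ b = u k)).
  - apply inf_le. eauto.
  - apply sup_le. intros b [k [Hk ->]]. auto.
Qed.

Lemma Finite_le_eps a b :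
  (forall e, 0 < e -> Rbar_le (Finite (a - e)) b) -> Rbar_le (Finite a) b.
Proof.
  intro H; destruct b as [r| |]; simpl; auto.
  - apply Rnot_lt_le; intro Hlt. specialize (H ((a - r)/2)). simpl in H. lra.
  - apply (H 1); lra.
Qed.

Lemma le_Finite_eps a b :
  (forall e, 0 < e -> Rbar_le b (Finite (a + e))) -> Rbar_le b (Finite a).
Proof.
  intro H; destruct b as [r| |]; simpl; auto.
  - apply Rnot_lt_le; intro Hlt. specialize (H ((r - a)/2)). simpl in H. lra.
  - apply (H 1); lra.
Qed.

Lemma Rabs_le_between (a b : R) : Rabs a <= b -> - b <= a <= b.
Proof. unfold Rabs; destruct Rcase_abs; lra. Qed.

Lemma le_of_vanishing_margin (z C e : R) : (forall T, 1 <= T -> z <= C / T + e) -> z <= e.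
Proof.
  intro H. apply Rnot_lt_le; intro Hlt.
  set (T := 1 + 2 * Rabs C / (z - e)).
  assert (HC := Rabs_pos C). assert (HCT : 0 <= 2 * Rabs C / (z - e)).
  { apply Rmult_le_pos; [lra | apply Rlt_le, Rinv_0_lt_compat; lra]. }
  assert (HT : 1 <= T) by (unfold T; lra).
  specialize (H T HT).
  assert (Hbound : C / T < z - e).
  { apply (Rmult_lt_reg_r T); [lra|].
    replace (C / T * T) with C by (field; lra).
    replace ((z - e) * T) with ((z - e) + 2 * Rabs C) by (unfold T; field; lra).
    pose proof (Rle_abs C); lra. }
  lra.
Qed.

Lemma slope_bound (mu C e : R) : (forall t, t * mu <= C + e * Rabs t) -> Rabs mu <= e.
Proof.
  intro H. apply Rabs_le; split.
  - enough (- mu <= e) by lra.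
    apply (le_of_vanishing_margin _ C). intros T HT. specialize (H (- T)).
    rewrite Rabs_Ropp, Rabs_pos_eq in H by lra.
    apply (Rmult_le_reg_l T); [lra|].
    replace (T * (C / T + e)) with (C + e * T) by (field; lra). lra.
  - apply (le_of_vanishing_margin _ C). intros T HT. specialize (H T).
    rewrite Rabs_pos_eq in H by lra.
    apply (Rmult_le_reg_l T); [lra|].
    replace (T * (C / T + e)) with (C + e * T) by (field; lra). lra.
Qed.

Section ConvexLipschitz.
Context {Y : NormedSpace}.

(* [v] lies on the segment from [u] to the point [u + s (v - u)] of the ray through [v]. *)
Lemma ray_point (u v : Y) (s : R) : s <> 0 ->
  ns_add (ns_scal (/ s) (ns_add u (ns_scal s (ns_sub v u)))) (ns_scal (1 - / s) u) = v.
Proof.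
  intro Hs. rewrite ns_scal_distr_l, ns_scal_assoc, Rinv_l, ns_scal_one by exact Hs.
  rewrite <- ns_add_assoc, (ns_add_comm (ns_sub v u)), ns_add_assoc, scal_add_same.
  replace (/ s + (1 - / s)) with 1 by ring. rewrite ns_scal_one. apply add_sub.
Qed.

(* A convex function with linear growth [|g y| <= c (1 + |y|)] is [c]-Lipschitz:
   its increments along rays cannot exceed the growth rate. *)
Lemma convex_growth_increment (g : Y -> R) (c : R) : 0 <= c -> convex_fun g ->
  (forall y, Rabs (g y) <= c * (1 + ns_norm y)) ->
  forall u v, g v - g u <= c * ns_norm (ns_sub v u).
Proof.
  intros Hc Hconv Hb u v. set (d := ns_norm (ns_sub v u)).
  apply (le_of_vanishing_margin _ (2 * c * (1 + ns_norm u))). intros s Hs.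
  set (w := ns_add u (ns_scal s (ns_sub v u))).
  assert (Hcv := Hconv w u (/ s)). unfold w in Hcv.
  rewrite ray_point in Hcv by lra. fold w in Hcv.
  assert (Hs' : 0 < / s <= 1).
  { split; [apply Rinv_0_lt_compat; lra|]. rewrite <- Rinv_1. apply Rinv_le_contravar; lra. }
  specialize (Hcv ltac:(lra)).
  assert (Hw : ns_norm w <= ns_norm u + s * d).
  { unfold w, d. eapply Rle_trans; [apply ns_norm_triangle|].
    rewrite ns_norm_scal, Rabs_pos_eq by lra. lra. }
  assert (Hgw := Hb w). assert (Hgu := Hb u).
  apply Rabs_le_between in Hgw. apply Rabs_le_between in Hgu.
  assert (Hinc : g w - g u <= 2 * c * (1 + ns_norm u) + c * s * d) by nra.
  assert (Hstep : g v - g u <= / s * (g w - g u)).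
  { replace (/ s * (g w - g u)) with (/ s * g w + (1 - / s) * g u - g u) by ring. lra. }
  apply Rle_trans with (/ s * (2 * c * (1 + ns_norm u) + c * s * d)).
  - apply Rle_trans with (/ s * (g w - g u)); [exact Hstep|].
    apply Rmult_le_compat_l; lra.
  - apply Req_le. field. lra.
Qed.

Lemma convex_growth_lipschitz (g : Y -> R) (c : R) : 0 <= c -> convex_fun g ->
  (forall y, Rabs (g y) <= c * (1 + ns_norm y)) ->
  forall u v, Rabs (g u - g v) <= c * ns_norm (ns_sub u v).
Proof.
  intros Hc Hconv Hb u v. apply Rabs_le. split.
  - assert (H := convex_growth_increment g c Hc Hconv Hb u v).
    rewrite norm_sub_sym in H. lra.
  - apply (convex_growth_increment g c Hc Hconv Hb v u).
Qed.

Lemma linear_bound_of_affine (m : Y -> R) (al be : R) : is_linear_functional m ->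
  (forall y, m y <= al + be * ns_norm y) -> forall y, Rabs (m y) <= be * ns_norm y.
Proof.
  intros [_ Hscal] Hb y. apply (slope_bound _ al). intro t.
  rewrite <- Hscal. specialize (Hb (ns_scal t y)). rewrite ns_norm_scal in Hb. lra.
Qed.

End ConvexLipschitz.

Lemma real_interpolation (A B : R -> Prop) :
  (exists a, A a) -> (exists b, B b) -> (forall a b, A a -> B b -> a <= b) ->
  exists alpha, (forall a, A a -> a <= alpha) /\ (forall b, B b -> alpha <= b).
Proof.
  intros [a0 Ha0] [b0 Hb0] HAB.
  destruct (completeness A) as [alpha [Hup Hleast]].
  - exists b0. intros a Ha. apply HAB; auto.
  - exists a0; exact Ha0.
  - exists alpha; split; [exact Hup|]. intros b Hb. apply Hleast. intros a Ha. apply HAB; auto.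
Qed.

Lemma quotient_comparison s t a b c d : 0 < s -> 0 < t ->
  t / (s + t) * a + (1 - t / (s + t)) * b <= t / (s + t) * c + (1 - t / (s + t)) * d ->
  (a - c) / s <= (d - b) / t.
Proof.
  intros Hs Ht H.
  assert (H' : t * a + s * b <= t * c + s * d).
  { apply Rmult_le_compat_l with (r := s + t) in H; [|lra].
    replace ((s + t) * (t / (s + t) * a + (1 - t / (s + t)) * b)) with (t * a + s * b) in H
      by (field; lra).
    replace ((s + t) * (t / (s + t) * c + (1 - t / (s + t)) * d)) with (t * c + s * d) in H
      by (field; lra).
    exact H. }
  apply (Rmult_le_reg_r (s * t)); [nra|].
  replace ((a - c) / s * (s * t)) with ((a - c) * t) by (field; lra).
  replace ((d - b) / t * (s * t)) with ((d - b) * s) by (field; lra). nra.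
Qed.

(* Partial linear
   functionals are represented by their graphs, subsets of [Y * R] closed under
   the linear operations; a dominated graph is automatically single-valued, a
   maximal one (Zorn) is total, by the classical one-dimensional extension. *)
Section HahnBanach.
Context {Y : NormedSpace} {Z : Type}.
Variable Phi : Y -> Z -> R.
Variable z0 : Z.
Hypothesis Phi_convex : forall (u v : Y) (a b : Z) (t : R), 0 <= t <= 1 ->
  exists c, Phi (ns_add (ns_scal t u) (ns_scal (1 - t) v)) c <= t * Phi u a + (1 - t) * Phi v b.
Hypothesis Phi_nonneg : forall b, 0 <= Phi ns_zero b.

Record linear_graph (G : Y * R -> Prop) : Prop := {
  graph_add : forall y r y' r', G (y, r) -> G (y', r') -> G (ns_add y y', r + r');
  graph_scal : forall a y r, G (y, r) -> G (ns_scal a y, a * r)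
}.

Definition dominated (G : Y * R -> Prop) : Prop :=
  forall y r b, G (y, r) -> r <= Phi y b.

Lemma graph_origin (G : Y * R -> Prop) y r : linear_graph G -> G (y, r) -> G (ns_zero, 0).
Proof.
  intros HG Hyr. replace (ns_zero, 0) with (ns_scal 0 y, 0 * r)
    by (rewrite scal_0, Rmult_0_l; reflexivity).
  apply (graph_scal G HG); exact Hyr.
Qed.

(* A dominated linear graph is the graph of a function: a vertical line
   [(0, t d)] through it would be unbounded above. *)
Lemma dominated_graph_functional (G : Y * R -> Prop) y r r' :
  linear_graph G -> dominated G -> G (y, r) -> G (y, r') -> r = r'.
Proof.
  intros HG HD Hr Hr'.
  assert (Hv : G (ns_zero, r + -1 * r')).
  { rewrite <- (ns_add_opp y), opp_scal.
    apply (graph_add G HG); [exact Hr | apply (graph_scal G HG); exact Hr']. }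
  assert (Hslope : Rabs (r - r') <= 0).
  { apply (slope_bound _ (Phi ns_zero z0)). intro t.
    assert (Ht := graph_scal G HG t _ _ Hv). rewrite scal_zero in Ht.
    specialize (HD _ _ z0 Ht). lra. }
  apply Rabs_le_between in Hslope. lra.
Qed.

Lemma chain_union_linear (F : (Y * R -> Prop) -> Prop) :
  (forall G, F G -> linear_graph G) -> classical_sets.total_on F classical_sets.subset ->
  linear_graph (classical_sets.bigcup F (fun G => G)).
Proof.
  intros HF Htot. split.
  - intros y r y' r' [G1 HG1 H1] [G2 HG2 H2].
    destruct (Htot G1 G2 HG1 HG2) as [Hsub|Hsub].
    + exists G2; [exact HG2|].
      apply (graph_add G2 (HF G2 HG2)); [apply Hsub; exact H1 | exact H2].
    + exists G1; [exact HG1|].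
      apply (graph_add G1 (HF G1 HG1)); [exact H1 | apply Hsub; exact H2].
  - intros a y r [G HG H]. exists G; [exact HG|]. apply (graph_scal G (HF G HG)); exact H.
Qed.

Section OneStepExtension.
Variables (G : Y * R -> Prop) (z : Y).
Hypotheses (HG : linear_graph G) (HD : dominated G).

Lemma extension_gap e r e' r' s t b b' : G (e, r) -> G (e', r') -> 0 < s -> 0 < t ->
  (r - Phi (ns_add e (ns_scal (- s) z)) b) / s <= (Phi (ns_add e' (ns_scal t z)) b' - r') / t.
Proof.
  intros He He' Hs Ht. set (lam := t / (s + t)).
  assert (Hlam : 0 <= lam <= 1).
  { unfold lam. split; [apply Rlt_le, Rdiv_lt_0_compat; lra|].
    apply (Rmult_le_reg_r (s + t)); [lra|]. replace (t / (s + t) * (s + t)) with t by (field; lra).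
    lra. }
  destruct (Phi_convex (ns_add e (ns_scal (- s) z)) (ns_add e' (ns_scal t z)) b b' lam Hlam)
    as [c Hc].
  rewrite scal_add4, !ns_scal_assoc, scal_add_same in Hc.
  replace (lam * - s + (1 - lam) * t) with 0 in Hc by (unfold lam; field; lra).
  rewrite scal_0, ns_add_zero in Hc.
  assert (Hmix := HD _ _ c (graph_add G HG _ _ _ _
                    (graph_scal G HG lam _ _ He) (graph_scal G HG (1 - lam) _ _ He'))).
  apply quotient_comparison; auto. fold lam. lra.
Qed.

Definition extend_graph (alpha : R) (p : Y * R) : Prop :=
  exists e r t, G (e, r) /\ p = (ns_add e (ns_scal t z), r + t * alpha).

Lemma extend_graph_linear alpha : linear_graph (extend_graph alpha).
Proof.
  split.
  - intros y r y' r' [e [q [t [He E]]]] [e' [q' [t' [He' E']]]].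
    injection E as -> ->. injection E' as -> ->.
    exists (ns_add e e'), (q + q'), (t + t'). split; [apply (graph_add G HG); auto|].
    rewrite add_add4, scal_add_same. f_equal. ring.
  - intros a y r [e [q [t [He E]]]]. injection E as -> ->.
    exists (ns_scal a e), (a * q), (a * t). split; [apply (graph_scal G HG); auto|].
    rewrite ns_scal_distr_l, ns_scal_assoc. f_equal. ring.
Qed.

Lemma extend_graph_dominated alpha :
  (forall e r s b, G (e, r) -> 0 < s -> (r - Phi (ns_add e (ns_scal (- s) z)) b) / s <= alpha) ->
  (forall e r t b, G (e, r) -> 0 < t -> alpha <= (Phi (ns_add e (ns_scal t z)) b - r) / t) ->
  dominated (extend_graph alpha).
Proof.
  intros Hback Hfwd y r b [e [q [t [He E]]]]. injection E as -> ->.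
  destruct (Rtotal_order t 0) as [Hneg|[H0|Hpos]].
  - specialize (Hback e q (- t) b He ltac:(lra)). rewrite Ropp_involutive in Hback.
    apply (Rmult_le_compat_l (- t)) in Hback; [|lra].
    replace (- t * ((q - Phi (ns_add e (ns_scal t z)) b) / - t))
      with (q - Phi (ns_add e (ns_scal t z)) b) in Hback by (field; lra). lra.
  - subst t. rewrite scal_0, ns_add_zero, Rmult_0_l, Rplus_0_r. apply HD; exact He.
  - specialize (Hfwd e q t b He Hpos).
    apply (Rmult_le_compat_l t) in Hfwd; [|lra].
    replace (t * ((Phi (ns_add e (ns_scal t z)) b - q) / t))
      with (Phi (ns_add e (ns_scal t z)) b - q) in Hfwd by (field; lra). lra.
Qed.

Lemma one_step_extension : G (ns_zero, 0) -> ~ (exists r, G (z, r)) ->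
  exists G', linear_graph G' /\ dominated G' /\ classical_sets.proper G G'.
Proof.
  intros H0 Hz.
  destruct (real_interpolation
    (fun q => exists e r s b, G (e, r) /\ 0 < s /\ q = (r - Phi (ns_add e (ns_scal (- s) z)) b) / s)
    (fun q => exists e r t b, G (e, r) /\ 0 < t /\ q = (Phi (ns_add e (ns_scal t z)) b - r) / t))
    as [alpha [Hback Hfwd]].
  - eexists. exists ns_zero, 0, 1, z0. repeat split; auto; lra.
  - eexists. exists ns_zero, 0, 1, z0. repeat split; auto; lra.
  - intros q q' [e [r [s [b [He [Hs ->]]]]]] [e' [r' [t [b' [He' [Ht ->]]]]]].
    apply extension_gap; auto.
  - exists (extend_graph alpha). split; [apply extend_graph_linear|]. split.
    + apply extend_graph_dominated.
      * intros e r s b He Hs. apply Hback. exists e, r, s, b. auto.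
      * intros e r t b He Ht. apply Hfwd. exists e, r, t, b. auto.
    + split.
      * intros [y r] Hyr. exists y, r, 0. split; auto.
        rewrite scal_0, ns_add_zero, Rmult_0_l, Rplus_0_r. reflexivity.
      * intro Hsub. apply Hz. exists alpha. apply Hsub. exists ns_zero, 0, 1.
        split; auto. rewrite ns_scal_one, add_0l. f_equal. ring.
Qed.

End OneStepExtension.

Lemma origin_graph :
  linear_graph (fun p => p = (ns_zero, 0)) /\ dominated (fun p => p = (ns_zero, 0)).
Proof.
  split; [split|].
  - intros y r y' r' E E'. injection E as -> ->. injection E' as -> ->.
    rewrite ns_add_zero, Rplus_0_r. reflexivity.
  - intros a y r E. injection E as -> ->. rewrite scal_zero, Rmult_0_r. reflexivity.
  - intros y r b E. injection E as -> ->. apply Phi_nonneg.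
Qed.

(* By Zorn's lemma on dominated linear graphs, a maximal one is total, hence the
   graph of the required linear functional. *)
Theorem hahn_banach :
  exists m : Y -> R, is_linear_functional m /\ forall y b, m y <= Phi y b.
Proof.
  destruct (classical_sets.Zorn_bigcup
              (P := fun G : Y * R -> Prop => linear_graph G /\ dominated G))
    as [A [[HA HAD] Hmax]].
  { intros F HF Htot. split.
    - apply chain_union_linear; [|exact Htot]. intros G HG. apply (HF G HG).
    - intros y r b [G HG Hyr]. apply (proj2 (HF G HG)); exact Hyr. }
  assert (HA0 : A (ns_zero, 0)).
  { destruct (classic (exists p, A p)) as [[[y r] Hyr]|Hempty].
    - exact (graph_origin A y r HA Hyr).
    - exfalso. apply (Hmax (fun p => p = (ns_zero, 0))); [|exact origin_graph].
      split; [intros p Hp; exfalso; apply Hempty; eauto|].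
      intro Hsub. apply Hempty. exists (ns_zero, 0). apply Hsub. reflexivity. }
  assert (Htotal : forall y, exists r, A (y, r)).
  { intro y. apply NNPP. intro Hy.
    destruct (one_step_extension A y HA HAD HA0 Hy) as [G' [HG' [HD' Hprop]]].
    exact (Hmax G' Hprop (conj HG' HD')). }
  destruct (choice (fun y r => A (y, r)) Htotal) as [m Hm].
  exists m. split; [split|].
  - intros u v. apply (dominated_graph_functional A (ns_add u v) _ _ HA HAD (Hm _)).
    apply (graph_add A HA); apply Hm.
  - intros a u. apply (dominated_graph_functional A (ns_scal a u) _ _ HA HAD (Hm _)).
    apply (graph_scal A HA); apply Hm.
  - intros y b. apply HAD, Hm.
Qed.

End HahnBanach.

Section LinearCombinations.
Context {Y : NormedSpace}.

Fixpoint lincomb (ys : list Y) (a : nat -> R) : Y :=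
  match ys with
  | nil => ns_zero
  | y :: ys' => ns_add (ns_scal (a 0%nat) y) (lincomb ys' (fun i => a (S i)))
  end.

Fixpoint coef_norm (ys : list Y) (a : nat -> R) : R :=
  match ys with
  | nil => 0
  | _ :: ys' => Rabs (a 0%nat) + coef_norm ys' (fun i => a (S i))
  end.

Lemma coef_norm_nonneg ys a : 0 <= coef_norm ys a.
Proof.
  revert a; induction ys as [|y ys IH]; intro a; simpl; [lra|].
  specialize (IH (fun i => a (S i))). pose proof (Rabs_pos (a 0%nat)); lra.
Qed.

Lemma lincomb_mix ys a b t s :
  lincomb ys (fun i => t * a i + s * b i) =
  ns_add (ns_scal t (lincomb ys a)) (ns_scal s (lincomb ys b)).
Proof.
  revert a b; induction ys as [|y ys IH]; intros a b; simpl.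
  - rewrite !scal_zero, ns_add_zero; reflexivity.
  - rewrite (IH (fun i => a (S i)) (fun i => b (S i))), scal_add4, !ns_scal_assoc,
      scal_add_same. reflexivity.
Qed.

Lemma coef_norm_mix ys a b t s : 0 <= t -> 0 <= s ->
  coef_norm ys (fun i => t * a i + s * b i) <= t * coef_norm ys a + s * coef_norm ys b.
Proof.
  intros Ht Hs. revert a b; induction ys as [|y ys IH]; intros a b; simpl; [lra|].
  specialize (IH (fun i => a (S i)) (fun i => b (S i))).
  assert (Rabs (t * a 0%nat + s * b 0%nat) <= t * Rabs (a 0%nat) + s * Rabs (b 0%nat)).
  { eapply Rle_trans; [apply Rabs_triang|].
    rewrite !Rabs_mult, (Rabs_pos_eq t Ht), (Rabs_pos_eq s Hs). lra. }
  lra.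
Qed.

Lemma lincomb_scal ys a t : lincomb ys (fun i => t * a i) = ns_scal t (lincomb ys a).
Proof.
  revert a; induction ys as [|y ys IH]; intro a; simpl.
  - rewrite scal_zero; reflexivity.
  - rewrite (IH (fun i => a (S i))), ns_scal_distr_l, ns_scal_assoc. reflexivity.
Qed.

Lemma coef_norm_scal ys a t : 0 <= t -> coef_norm ys (fun i => t * a i) = t * coef_norm ys a.
Proof.
  intro Ht. revert a; induction ys as [|y ys IH]; intro a; simpl; [ring|].
  rewrite (IH (fun i => a (S i))), Rabs_mult, (Rabs_pos_eq t Ht). ring.
Qed.

Lemma lincomb_zero ys : lincomb ys (fun _ => 0) = ns_zero.
Proof.
  induction ys as [|y ys IH]; simpl; [reflexivity|].
  rewrite IH, scal_0, ns_add_zero. reflexivity.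
Qed.

Lemma coef_norm_zero ys : coef_norm ys (fun _ => 0) = 0.
Proof. induction ys as [|y ys IH]; simpl; [reflexivity|]. rewrite IH, Rabs_R0. ring. Qed.

Lemma lincomb_member ys y t : In y ys ->
  exists a, lincomb ys a = ns_scal t y /\ coef_norm ys a = Rabs t.
Proof.
  induction ys as [|y0 ys IH]; intro Hin; [destruct Hin|].
  destruct Hin as [->|Hin].
  - exists (fun i => match i with O => t | _ => 0 end). simpl.
    rewrite lincomb_zero, coef_norm_zero, ns_add_zero. split; [reflexivity|ring].
  - destruct (IH Hin) as [a [Ha1 Ha2]].
    exists (fun i => match i with O => 0 | S j => a j end). simpl.
    change (fun i => a i) with a. rewrite Ha1, Ha2, scal_0, add_0l, Rabs_R0.
    split; [reflexivity|ring].
Qed.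

End LinearCombinations.

Lemma interval_net (A eps : R) : 0 < eps ->
  exists T : list R, forall t, Rabs t <= A -> exists tau, In tau T /\ Rabs (t - tau) <= eps.
Proof.
  intro He. destruct (INR_unbounded (2 * A / eps)) as [N HN].
  exists (map (fun j => - A + INR j * eps) (seq 0 (S N))).
  intros t Ht. apply Rabs_le_between in Ht.
  assert (Hgrid : forall n, (n <= N)%nat -> - A <= t <= - A + INR n * eps ->
    exists i, (i <= n)%nat /\ Rabs (t - (- A + INR i * eps)) <= eps).
  { induction n as [|n IH]; intros Hn Htn.
    - exists 0%nat. split; [lia|]. simpl in *. apply Rabs_le. lra.
    - destruct (Rle_dec t (- A + INR n * eps)) as [Hle|Hgt].
      + destruct (IH ltac:(lia) ltac:(lra)) as [i [Hi Hti]]. exists i. split; [lia|exact Hti].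
      + exists (S n). split; [lia|]. rewrite S_INR in *. apply Rabs_le. lra. }
  destruct (Hgrid N (Nat.le_refl N)) as [i [Hi Hti]].
  { split; [lra|]. apply (Rmult_gt_compat_r eps) in HN; [|exact He].
    replace (2 * A / eps * eps) with (2 * A) in HN by (field; lra). lra. }
  exists (- A + INR i * eps). split; [|exact Hti].
  apply (in_map (fun j => - A + INR j * eps)). apply in_seq. lia.
Qed.

Section CompactBall.
Context {Y : NormedSpace}.

Lemma coef_ball_net (ys : list Y) (A : R) : forall h, 0 < h ->
  exists S : list Y, forall a, coef_norm ys a <= A ->
    exists s, In s S /\ ns_norm (ns_sub (lincomb ys a) s) <= h.
Proof.
  induction ys as [|y ys IH]; intros h Hh.
  - exists (ns_zero :: nil). intros a _. exists ns_zero. split; [left; reflexivity|].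
    simpl. rewrite sub_self, norm_zero. lra.
  - destruct (IH (h / 2)) as [S' HS']; [lra|].
    assert (Hy : 0 < h / (2 * (ns_norm y + 1))).
    { pose proof (ns_norm_nonneg y). apply Rdiv_lt_0_compat; lra. }
    destruct (interval_net A _ Hy) as [T HT].
    exists (flat_map (fun tau => map (fun s => ns_add (ns_scal tau y) s) S') T).
    intros a Ha. simpl in Ha.
    pose proof (Rabs_pos (a 0%nat)). pose proof (coef_norm_nonneg ys (fun i => a (S i))).
    destruct (HT (a 0%nat) ltac:(lra)) as [tau [Htau1 Htau2]].
    destruct (HS' (fun i => a (S i)) ltac:(lra)) as [s [Hs1 Hs2]].
    exists (ns_add (ns_scal tau y) s). split.
    + apply in_flat_map. exists tau. split; [exact Htau1|]. apply in_map; exact Hs1.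
    + simpl. rewrite sub_lin. eapply Rle_trans; [apply ns_norm_triangle|].
      rewrite ns_norm_scal. pose proof (ns_norm_nonneg y).
      assert (Rabs (a 0%nat - tau) * ns_norm y <= h / 2).
      { apply Rle_trans with (h / (2 * (ns_norm y + 1)) * ns_norm y).
        - apply Rmult_le_compat_r; auto.
        - apply (Rmult_le_reg_r (2 * (ns_norm y + 1))); [lra|].
          replace (h / (2 * (ns_norm y + 1)) * ns_norm y * (2 * (ns_norm y + 1)))
            with (h * ns_norm y) by (field; lra). nra. }
      lra.
Qed.

Lemma eventually_forall_list {A : Type} (S : list A) (P : nat -> A -> Prop) :
  (forall s, In s S -> exists N, forall k, (N <= k)%nat -> P k s) ->
  exists N, forall k, (N <= k)%nat -> forall s, In s S -> P k s.
Proof.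
  induction S as [|s0 S IH]; intro H.
  - exists 0%nat. intros k _ s [].
  - destruct (H s0 (or_introl eq_refl)) as [N1 HN1].
    destruct IH as [N2 HN2]; [intros s Hs; apply H; right; exact Hs|].
    exists (Nat.max N1 N2). intros k Hk s [<-|Hs].
    + apply HN1; lia.
    + apply HN2; [lia|exact Hs].
Qed.

(* Equi-Lipschitz functions converging from below at each point are eventually
   almost above a pointwise lower bound of the limit, uniformly on a
   finite-dimensional ball (which is compact). *)
Lemma equilipschitz_uniform_lower_bound (fs : nat -> Y -> R) (f : Y -> R) (L m0 : R)
  (ys : list Y) (A : R) :
  0 <= L -> (forall k u v, Rabs (fs k u - fs k v) <= L * ns_norm (ns_sub u v)) ->
  (forall y eps, 0 < eps -> exists N, forall k, (N <= k)%nat -> f y - eps <= fs k y) ->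
  (forall y, m0 <= f y) ->
  forall eps, 0 < eps -> exists N, forall k, (N <= k)%nat ->
    forall a, coef_norm ys a <= A -> m0 - eps <= fs k (lincomb ys a).
Proof.
  intros HL Hlip Hconv Hm0 eps Heps.
  set (h := eps / (2 * (L + 1))).
  assert (Hh : 0 < h) by (unfold h; apply Rdiv_lt_0_compat; lra).
  assert (HLh : L * h <= eps / 2).
  { unfold h. apply (Rmult_le_reg_r (2 * (L + 1))); [lra|].
    replace (L * (eps / (2 * (L + 1))) * (2 * (L + 1))) with (L * eps) by (field; lra). nra. }
  destruct (coef_ball_net ys A h Hh) as [S HS].
  destruct (eventually_forall_list S (fun k s => f s - eps / 2 <= fs k s)) as [N HN].
  { intros s _. apply Hconv. lra. }
  exists N. intros k Hk a Ha.
  destruct (HS a Ha) as [s [Hs1 Hs2]].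
  assert (Hd := Hlip k (lincomb ys a) s). apply Rabs_le_between in Hd.
  assert (L * ns_norm (ns_sub (lincomb ys a) s) <= L * h) by (apply Rmult_le_compat_l; auto).
  specialize (HN k Hk s Hs1). specialize (Hm0 s). lra.
Qed.

Lemma convex_lower_bound_from_ball (f : Y -> R) (ys : list Y) (A K R0 : R) :
  convex_fun f -> 0 < A -> 0 <= K -> 0 <= R0 -> f ns_zero <= R0 ->
  (forall a, coef_norm ys a <= A -> - K <= f (lincomb ys a)) ->
  forall a, - K - (K + R0) / A * coef_norm ys a <= f (lincomb ys a).
Proof.
  intros Hconv HA HK HR0 Hf0 Hball a. set (W := coef_norm ys a).
  assert (HW0 : 0 <= W) by apply coef_norm_nonneg.
  destruct (Rle_dec W A) as [HW|HW].
  - specialize (Hball a HW).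
    assert (0 <= (K + R0) / A * W).
    { apply Rmult_le_pos; [apply Rmult_le_pos; [|apply Rlt_le, Rinv_0_lt_compat]|]; lra. }
    lra.
  - set (lam := A / W). assert (HWp : 0 < W) by lra.
    assert (Hlam : 0 < lam < 1).
    { unfold lam. split; [apply Rdiv_lt_0_compat; lra|].
      apply (Rmult_lt_reg_r W); [lra|]. replace (A / W * W) with A by (field; lra). lra. }
    assert (Hsmall := Hball (fun i => lam * a i)).
    rewrite coef_norm_scal, lincomb_scal in Hsmall by lra.
    specialize (Hsmall ltac:(fold W; unfold lam; right; field; lra)).
    assert (Hcv := Hconv (lincomb ys a) ns_zero lam ltac:(lra)).
    rewrite scal_zero, ns_add_zero in Hcv.
    assert (H1 : (1 - lam) * f ns_zero <= R0) by nra.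
    assert (H2 : - K - R0 <= lam * f (lincomb ys a)) by lra.
    assert (H3 : - (K + R0) / A * W <= f (lincomb ys a)).
    { apply (Rmult_le_reg_l lam); [lra|].
      replace (lam * (- (K + R0) / A * W)) with (- K - R0) by (unfold lam; field; lra). lra. }
    lra.
Qed.

End CompactBall.

Section LinearFunctionals.
Context {Y : NormedSpace}.

Lemma pair_linear (x : dual Y) : is_linear_functional (pair x).
Proof. exact (proj1 (proj2_sig x)). Qed.

Lemma pair_bounded (x : dual Y) : exists M, 0 <= M /\ forall u, Rabs (pair x u) <= M * ns_norm u.
Proof.
  destruct (proj2 (proj2_sig x)) as [M HM]. exists (Rmax M 0). split; [apply Rmax_r|].
  intro u. eapply Rle_trans; [apply HM|].
  apply Rmult_le_compat_r; [apply ns_norm_nonneg | apply Rmax_l].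
Qed.

Lemma linear_zero (m : Y -> R) : is_linear_functional m -> m ns_zero = 0.
Proof. intros [_ Hscal]. rewrite <- (scal_0 ns_zero), Hscal. ring. Qed.

Lemma linear_sub (m : Y -> R) : is_linear_functional m -> forall u v, m (ns_sub u v) = m u - m v.
Proof. intros [Hadd Hscal] u v. unfold ns_sub. rewrite Hadd, opp_scal, Hscal. ring. Qed.

Lemma convex_minus_linear (f m : Y -> R) (C : R) : convex_fun f -> is_linear_functional m ->
  convex_fun (fun y => f y - m y + C).
Proof.
  intros Hf [Hadd Hscal] u v t Ht. specialize (Hf u v t Ht).
  rewrite Hadd, !Hscal. lra.
Qed.

End LinearFunctionals.

Section Penalty.
Context {Y : NormedSpace}.
Variables (f x : Y -> R) (ys : list Y) (C e : R).
Hypotheses (Hf : convex_fun f) (Hx : is_linear_functional x) (He : 0 <= e).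

(* [penalty y a] charges for moving [y] by a combination of [ys]; the infimum
   over [a] is an inf-convolution of [f - x + C] with [e] times the l1-norm. *)
Definition penalty (y : Y) (a : nat -> R) : R :=
  f (ns_add y (lincomb ys a)) - x (ns_add y (lincomb ys a)) + C + e * coef_norm ys a.

Lemma penalty_convex (u v : Y) (a b : nat -> R) (t : R) : 0 <= t <= 1 ->
  exists c, penalty (ns_add (ns_scal t u) (ns_scal (1 - t) v)) c <=
            t * penalty u a + (1 - t) * penalty v b.
Proof.
  intro Ht. exists (fun i => t * a i + (1 - t) * b i). unfold penalty.
  rewrite lincomb_mix, <- scal_add4.
  assert (Hcv := convex_minus_linear f x C Hf Hx
                   (ns_add u (lincomb ys a)) (ns_add v (lincomb ys b)) t Ht).
  simpl in Hcv.
  assert (Hn := coef_norm_mix ys a b t (1 - t) (proj1 Ht) ltac:(lra)).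
  assert (e * coef_norm ys (fun i => t * a i + (1 - t) * b i)
          <= e * (t * coef_norm ys a + (1 - t) * coef_norm ys b))
    by (apply Rmult_le_compat_l; lra).
  lra.
Qed.

Lemma penalized_minorant :
  (forall a, 0 <= f (lincomb ys a) - x (lincomb ys a) + C + e * coef_norm ys a) ->
  exists m, is_linear_functional m /\ (forall y, m y <= f y - x y + C) /\
            (forall y, In y ys -> Rabs (m y) <= e).
Proof.
  intro Hnonneg.
  destruct (hahn_banach penalty (fun _ => 0) penalty_convex) as [m [Hm Hdom]].
  { intro a. unfold penalty. rewrite add_0l. apply Hnonneg. }
  assert (Hzero : forall y, penalty y (fun _ => 0) = f y - x y + C).
  { intro y. unfold penalty. rewrite lincomb_zero, coef_norm_zero, ns_add_zero. ring. }
  exists m. split; [exact Hm|]. split.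
  - intro y. rewrite <- Hzero. apply Hdom.
  - intros y Hy. apply (slope_bound _ (f ns_zero - x ns_zero + C)). intro t.
    destruct (lincomb_member ys y (- t) Hy) as [a [Ha1 Ha2]].
    rewrite <- (proj2 Hm). eapply Rle_trans; [apply (Hdom _ a)|].
    unfold penalty. rewrite Ha1, Ha2, scal_add_same, Rplus_opp_r, scal_0, Rabs_Ropp. lra.
Qed.

End Penalty.

Lemma dual_perturbation {Y : NormedSpace} (f : Y -> R) (c : R) (x : dual Y)
  (ys : list Y) (C e : R) :
  convex_fun f -> (forall y, Rabs (f y) <= c * (1 + ns_norm y)) -> 0 <= e ->
  (forall a, 0 <= f (lincomb ys a) - pair x (lincomb ys a) + C + e * coef_norm ys a) ->
  exists x' : dual Y, (forall y, In y ys -> Rabs (pair x' y - pair x y) <= e) /\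
                      (forall y, pair x' y - f y <= C).
Proof.
  intros Hf Hgrowth He Hnonneg.
  destruct (penalized_minorant f (pair x) ys C e Hf (pair_linear x) He Hnonneg)
    as [m [Hm [Hdom Hsmall]]].
  destruct (pair_bounded x) as [M [HM HxM]].
  assert (Hmb : forall y, Rabs (m y) <= (c + M) * ns_norm y).
  { apply (linear_bound_of_affine m (c + Rabs C)); [exact Hm|]. intro y.
    specialize (Hdom y). specialize (Hgrowth y). specialize (HxM y).
    apply Rabs_le_between in Hgrowth. apply Rabs_le_between in HxM.
    pose proof (Rle_abs C). lra. }
  assert (Hlin : is_linear_functional (fun y => pair x y + m y)).
  { destruct (pair_linear x) as [Hxa Hxs]. destruct Hm as [Hma Hms]. split.
    - intros u v. rewrite Hxa, Hma. ring.
    - intros a u. rewrite Hxs, Hms. ring. }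
  assert (Hbd : is_bounded_functional (fun y => pair x y + m y)).
  { exists (M + (c + M)). intro u. eapply Rle_trans; [apply Rabs_triang|].
    specialize (HxM u). specialize (Hmb u). lra. }
  exists (exist _ (fun y => pair x y + m y) (conj Hlin Hbd)). unfold pair at 1 3; simpl.
  split.
  - intros y Hy. replace (pair x y + m y - pair x y) with (m y) by ring. apply Hsmall, Hy.
  - intro y. specialize (Hdom y). lra.
Qed.

(* Uniformly on the whole span of [ys] (up to the penalty [e |a|_1]), the
   functions [g_k - x + s0] are eventually almost nonnegative, when
   [x - g <= s0]: equi-Lipschitz convergence on a compact ball, then convexity
   outside of it. *)
Lemma conjugate_gap_lower_bound {Y : NormedSpace} (gs : nat -> Y -> R) (g : Y -> R)
  (c : R) (x : dual Y) (s0 : R) (ys : list Y) (e dl : R) :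
  (forall n, convex_fun (gs n)) -> (forall y, Un_cv (fun n => gs n y) (g y)) -> 0 <= c ->
  (forall n y, Rabs (gs n y) <= c * (1 + ns_norm y)) ->
  (forall y, pair x y - g y <= s0) -> 0 < e -> 0 < dl ->
  exists N, forall k, (N <= k)%nat -> forall a,
    0 <= gs k (lincomb ys a) - pair x (lincomb ys a) + (s0 + dl) + e * coef_norm ys a.
Proof.
  intros Hconv Hcv Hc Hgrowth Hs0 He Hdl.
  destruct (pair_bounded x) as [M [HM HxM]].
  set (fs := fun k y => gs k y - pair x y + s0).
  set (R0 := c + Rabs s0). set (A := (dl / 2 + R0) / e).
  assert (HR0 : 0 <= R0) by (unfold R0; pose proof (Rabs_pos s0); lra).
  assert (HA : 0 < A) by (unfold A; apply Rdiv_lt_0_compat; lra).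
  destruct (equilipschitz_uniform_lower_bound fs (fun y => g y - pair x y + s0) (c + M) 0
              ys A ltac:(lra)) with (eps := dl / 2) as [N HN].
  - intros k u v. unfold fs.
    assert (H1 := convex_growth_lipschitz (gs k) c Hc (Hconv k) (Hgrowth k) u v).
    assert (H2 := HxM (ns_sub u v)). rewrite linear_sub in H2 by apply pair_linear.
    apply Rabs_le_between in H1. apply Rabs_le_between in H2. apply Rabs_le. lra.
  - intros y eps Heps. destruct (Hcv y eps Heps) as [N HN]. exists N. intros k Hk.
    specialize (HN k Hk). unfold R_dist in HN. apply Rlt_le, Rabs_le_between in HN.
    unfold fs. lra.
  - intro y. specialize (Hs0 y). lra.
  - lra.
  - exists N. intros k Hk a.
    assert (Hf0 : fs k ns_zero <= R0).
    { unfold fs, R0. rewrite (linear_zero _ (pair_linear x)).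
      specialize (Hgrowth k ns_zero). rewrite norm_zero in Hgrowth.
      apply Rabs_le_between in Hgrowth. pose proof (Rle_abs s0). lra. }
    assert (Hball : forall a, coef_norm ys a <= A -> - (dl / 2) <= fs k (lincomb ys a)).
    { intros a' Ha'. specialize (HN k Hk a' Ha'). lra. }
    assert (Hglobal := convex_lower_bound_from_ball (fs k) ys A (dl / 2) R0
      (convex_minus_linear _ _ _ (Hconv k) (pair_linear x)) HA ltac:(lra) HR0 Hf0 Hball a).
    replace ((dl / 2 + R0) / A) with e in Hglobal by (unfold A; field; lra).
    unfold fs in Hglobal. lra.
Qed.

Lemma conjugate_ge {Y : NormedSpace} (g : Y -> R) (x : dual Y) (y : Y) :
  Rbar_le (Finite (pair x y - g y)) (conjugate g x).
Proof. apply le_sup. exists y; reflexivity. Qed.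

(* Gamma-liminf inequality: near [x], [g_n^*] is eventually almost above
   [<x, y> - g y] for each fixed [y]. *)
Lemma conjugate_le_gamma_liminf {Y : NormedSpace} (gs : nat -> Y -> R) (g : Y -> R)
  (x : dual Y) :
  (forall y, Un_cv (fun n => gs n y) (g y)) ->
  Rbar_le (conjugate g x) (gamma_liminf (fun n => conjugate (gs n)) x).
Proof.
  intro Hcv. apply sup_le. intros a [y ->]. apply Finite_le_eps. intros e He.
  set (V := fun x' : dual Y => Rabs (pair x' y - pair x y) < e / 2).
  assert (HV : weakstar_nbhd x V).
  { exists (y :: nil), (e / 2). split; [lra|]. intros x' Hx'. apply Hx'. left; reflexivity. }
  destruct (Hcv y (e / 2)) as [N HN]; [lra|].
  eapply Rbar_le_trans; [|apply le_sup; exists V; split; [exact HV|reflexivity]].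
  apply (liminf_ge _ _ N). intros k Hk. apply le_inf. intros a [x' [Hx' ->]].
  eapply Rbar_le_trans; [|apply conjugate_ge with (y := y)].
  simpl. specialize (HN k Hk). unfold R_dist in HN. unfold V in Hx'.
  apply Rabs_def2 in HN. apply Rabs_def2 in Hx'. lra.
Qed.

Lemma gamma_liminf_le_limsup {Y : NormedSpace} (f : nat -> dual Y -> Rbar) (x : dual Y) :
  Rbar_le (gamma_liminf f x) (gamma_limsup f x).
Proof.
  apply sup_le. intros a [V [HV ->]].
  eapply Rbar_le_trans; [apply liminf_le_limsup|]. apply le_sup. exists V; auto.
Qed.

(* Gamma-limsup inequality: every weak-star neighbourhood of [x] eventually
   contains a point [x'] with [g_k^*(x') <= g^*(x) + dl]. *)
Lemma gamma_limsup_le_conjugate {Y : NormedSpace} (gs : nat -> Y -> R) (g : Y -> R)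
  (c : R) (x : dual Y) :
  (forall n, convex_fun (gs n)) -> (forall y, Un_cv (fun n => gs n y) (g y)) -> 0 <= c ->
  (forall n y, Rabs (gs n y) <= c * (1 + ns_norm y)) ->
  Rbar_le (gamma_limsup (fun n => conjugate (gs n)) x) (conjugate g x).
Proof.
  intros Hconv Hcv Hc Hgrowth. apply sup_le. intros a [V [[ys [eps [Heps HV]]] ->]].
  assert (Hfin := conjugate_ge g x ns_zero).
  destruct (conjugate g x) as [s0| |] eqn:Econj;
    [|destruct (Rbar_limsup _); exact I|contradiction].
  assert (Hs0 : forall y, pair x y - g y <= s0).
  { intro y. generalize (conjugate_ge g x y). rewrite Econj. auto. }
  apply le_Finite_eps. intros dl Hdl.
  destruct (conjugate_gap_lower_bound gs g c x s0 ys (eps / 2) dl Hconv Hcv Hc Hgrowth Hs0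
              ltac:(lra) Hdl) as [N HN].
  apply (limsup_le _ _ N). intros k Hk.
  destruct (dual_perturbation (gs k) c x ys (s0 + dl) (eps / 2) (Hconv k) (Hgrowth k)
              ltac:(lra) (HN k Hk)) as [x' [Hnear Hbelow]].
  eapply Rbar_le_trans; [apply inf_le; exists x'; split; [|reflexivity]|].
  - apply HV. intros y Hy. specialize (Hnear y Hy). lra.
  - apply sup_le. intros b [y ->]. apply Hbelow.
Qed.

Theorem mainTheorem16 (Y : NormedSpace) (gs : nat -> Y -> R) (g : Y -> R) :
  (forall n, convex_fun (gs n)) ->
  (forall y, Un_cv (fun n => gs n y) (g y)) ->
  (exists c, 0 < c /\ forall n y, Rabs (gs n y) <= c * (1 + ns_norm y)) ->
  gamma_converges (fun n => conjugate (gs n)) (conjugate g).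
Proof.
  intros Hconv Hcv [c [Hc Hgrowth]] x.
  assert (Hlow := conjugate_le_gamma_liminf gs g x Hcv).
  assert (Hmid := gamma_liminf_le_limsup (fun n => conjugate (gs n)) x).
  assert (Hup := gamma_limsup_le_conjugate gs g c x Hconv Hcv (Rlt_le _ _ Hc) Hgrowth).
  split; apply Rbar_le_antisym; eauto using Rbar_le_trans.
Qed.
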